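(* Let $K\ge1$, $N=2^K-1$ and $\mu>0$. The $(N,K)$ binary simplex coded system with node service rate $\mu$ can serve arrival rates $(\lambda_1,\dots,\lambda_K)\in\mathbb{R}_{\ge0}^K$ if and only if $\lambda_1+\dots+\lambda_K\le 2^{K-1}\mu$. That is, its service capacity region is the simplex $\{(\lambda_1,\dots,\lambda_K)\in\mathbb{R}_{\ge0}^K:\sum_i\lambda_i\le 2^{K-1}\mu\}$.
   Context: Binary simplex coded system: $K$ files $f_1,\dots,f_K$ of equal size (elements of a vector space over a field of characteristic $2$) are stored on $N=2^K-1$ nodes indexed by the nonzero vectors $v\in\mathbb{F}_2^K$, node $v$ storing $\sum_{j=1}^K v_jf_j$. Each node has service rate $\mu$. Let $e_i$ be the $i$-th standard basis vector. The recovering sets of file $f_i$ are the systematic node $\{e_i\}$ and the $2^{K-1}-1$ disjoint repair groups $\{v,v+e_i\}$, $v\in\mathbb{F}_2^K\setminus\{0,e_i\}$ (each unordered pair counted once). Requests for $f_i$ arrive at rate $\lambda_i\ge0$. The system can serve $(\lambda_1,\dots,\lambda_K)$ (i.e., the vector lies in the service capacity region) if there exist nonnegative rates assigned to the recovering sets of each $f_i$, summing to $\lambda_i$ for every $i$, such that for every node the total rate assigned to recovering sets containing that node is at most $\mu$. *)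

From mathcomp Require Import all_boot all_order all_algebra.
Set Implicit Arguments. Unset Strict Implicit. Unset Printing Implicit Defensive.
Import Order.TTheory GRing.Theory Num.Theory.
Local Open Scope ring_scope.

Definition vecF2 (K : nat) := {ffun 'I_K -> bool}.

Definition vzero (K : nat) : vecF2 K := [ffun _ => false].
Definition vadd (K : nat) (u v : vecF2 K) : vecF2 K := [ffun j => xorb (u j) (v j)].
Definition ebasis (K : nat) (i : 'I_K) : vecF2 K := [ffun j => j == i].

(* The recovering sets of file f_i: the systematic node {e_i} and the repair
   groups {v, v + e_i}, v not in {0, e_i} (unordered pairs, counted once since
   they are sets). *)
Definition recovering_sets (K : nat) (i : 'I_K) : {set {set vecF2 K}} :=
  [set [set ebasis i]] :|:
  [set [set v; vadd v (ebasis i)] | v in [pred v : vecF2 K | (v != vzero K) && (v != ebasis i)]].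

Definition can_serve (R : realFieldType) (K : nat) (mu : R) (lam : 'I_K -> R) : Prop :=
  exists x : 'I_K -> {set vecF2 K} -> R,
    [/\ (forall i S, S \in recovering_sets i -> 0 <= x i S),
        (forall i, \sum_(S in recovering_sets i) x i S = lam i)
      & (forall v : vecF2 K, v != vzero K ->
           \sum_(i < K) \sum_(S in recovering_sets i | v \in S) x i S <= mu)].

From mathcomp Require Import all_boot all_order all_algebra.
From mathcomp Require Import zify.
Set Implicit Arguments. Unset Strict Implicit. Unset Printing Implicit Defensive.
Import Order.TTheory GRing.Theory Num.Theory.
Local Open Scope ring_scope.

(* Give each node the weight 1 if its Hamming weight is odd and 0 otherwise.
   Since adding e_i flips parity, every recovering set of every file contains
   exactly one odd node, so a recovering set served at rate r puts weighted load
   r on the nodes.  Hence sum_i lambda_i is the weighted total load, which is at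
   most mu times the number 2^(K-1) of odd nodes.  Conversely, u |-> (the
   recovering set of f_i whose odd node is u) is a bijection from the odd nodes
   onto the recovering sets of f_i, and each nonzero node lies in exactly one
   of them, so splitting lambda_i evenly over the 2^(K-1) recovering sets of
   f_i loads every node with sum_i lambda_i / 2^(K-1) <= mu. *)

Section SimplexCode.
Variable K : nat.
Implicit Types (u v : vecF2 K) (i : 'I_K).

Definition parity v : bool := \big[addb/false]_(j < K) v j.

Definition odd_vecs : {set vecF2 K} := [set v | parity v].

Lemma parity0 : parity (vzero K) = false.
Proof. by rewrite /parity big1 // => j _; rewrite ffunE. Qed.

Lemma parity_vadd_ebasis i v : parity (vadd v (ebasis i)) = ~~ parity v.
Proof.
have xorb_addb (a b : bool) : xorb a b = a (+) b by case: a b => [] [].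
rewrite /parity; under eq_bigr => j _ do rewrite !ffunE xorb_addb.
rewrite big_split /= [X in _ (+) X](bigD1 i) //= eqxx.
by rewrite [X in true (+) X]big1 ?addbT // => j /negbTE.
Qed.

Lemma vadd_ebasisK i : involutive (fun v => vadd v (ebasis i)).
Proof. by move=> v; apply/ffunP => j; rewrite !ffunE; case: (v j); case: (j == i). Qed.

Lemma vzero_add_ebasis i : vadd (vzero K) (ebasis i) = ebasis i.
Proof. by apply/ffunP => j; rewrite !ffunE. Qed.

Lemma parity_ebasis i : parity (ebasis i).
Proof. by rewrite -(vzero_add_ebasis i) parity_vadd_ebasis parity0. Qed.

Lemma vadd_ebasis_eq_ebasis i v : (vadd v (ebasis i) == ebasis i) = (v == vzero K).
Proof.
by rewrite -[X in _ == X](vzero_add_ebasis i) (can_eq (vadd_ebasisK i)).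
Qed.

Lemma card_odd_vecs : (0 < K)%N -> #|odd_vecs| = (2 ^ K.-1)%N.
Proof.
move=> K_gt0; pose e0 := ebasis (Ordinal K_gt0).
have flip : (fun v => vadd v e0) @^-1: odd_vecs = ~: odd_vecs.
  by apply/setP => v; rewrite !inE parity_vadd_ebasis.
have := cardsC odd_vecs.
rewrite -flip card_preimset; last exact: can_inj (vadd_ebasisK _).
have card_vecs : #|vecF2 K| = (2 * 2 ^ K.-1)%N.
  by rewrite card_ffun card_bool card_ord -expnS prednK.
by rewrite card_vecs; lia.
Qed.

(* The recovering set of f_i whose unique odd node is u (for u odd). *)
Definition recovering_set i u : {set vecF2 K} :=
  if u == ebasis i then [set ebasis i] else [set u; vadd u (ebasis i)].

Definition odd_rep i v := if parity v then v else vadd v (ebasis i).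

Lemma parity_odd_rep i v : parity (odd_rep i v).
Proof. by rewrite /odd_rep; case: ifP; rewrite // parity_vadd_ebasis => ->. Qed.

Lemma recovering_setsE i : recovering_sets i = recovering_set i @: odd_vecs.
Proof.
apply/setP => S; rewrite /recovering_sets !inE; apply/orP/imsetP.
- case=> [/eqP -> | /imsetP [v /andP [v_nz v_ne] ->]].
    by exists (ebasis i); rewrite ?inE ?parity_ebasis // /recovering_set eqxx.
  exists (odd_rep i v); first by rewrite inE parity_odd_rep.
  rewrite /odd_rep /recovering_set; case: (parity v); first by rewrite (negbTE v_ne).
  by rewrite vadd_ebasis_eq_ebasis (negbTE v_nz) vadd_ebasisK setUC.
- case=> u; rewrite inE /recovering_set => u_odd ->.
  case: (u =P ebasis i) => [_|/eqP u_ne]; [by left | right].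
  apply/imsetP; exists u => //; rewrite inE u_ne andbT.
  by apply: contraTneq u_odd => ->; rewrite parity0.
Qed.

Lemma mem_recovering_set i u v :
  parity u -> v \in recovering_set i u -> odd_rep i v = u.
Proof.
rewrite /recovering_set /odd_rep => u_odd; case: eqP => [->|_].
  by rewrite inE => /eqP ->; rewrite parity_ebasis.
case/set2P=> ->; first by rewrite u_odd.
by rewrite parity_vadd_ebasis u_odd vadd_ebasisK.
Qed.

Lemma recovering_set_inj i : {in odd_vecs &, injective (recovering_set i)}.
Proof.
move=> u w; rewrite !inE => u_odd w_odd eq_uw.
have w_in : w \in recovering_set i w.
  by rewrite /recovering_set; case: eqP => [->|_]; rewrite !inE eqxx.
by rewrite -(mem_recovering_set w_odd w_in) (mem_recovering_set u_odd) ?eq_uw.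
Qed.

Lemma mem_recovering_set_odd_rep i v :
  v != vzero K -> v \in recovering_set i (odd_rep i v).
Proof.
move=> v_nz; rewrite /odd_rep /recovering_set; case: (parity v).
  by case: (v =P ebasis i) => [->|_]; rewrite !inE eqxx.
by rewrite vadd_ebasis_eq_ebasis (negbTE v_nz) !inE vadd_ebasisK eqxx orbT.
Qed.

Lemma recovering_sets_through i v : v != vzero K ->
  [set S in recovering_sets i | v \in S] = [set recovering_set i (odd_rep i v)].
Proof.
move=> v_nz; apply/setP => S; rewrite recovering_setsE !inE.
apply/andP/eqP => [[/imsetP [u]] | ->].
  by rewrite inE => u_odd -> /(mem_recovering_set u_odd) ->.
split; last exact: mem_recovering_set_odd_rep.
by apply/imsetP; exists (odd_rep i v); rewrite ?inE ?parity_odd_rep.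
Qed.

Section Allocations.
Variable R : pzSemiRingType.
Implicit Types x : 'I_K -> {set vecF2 K} -> R.

Definition node_load x v : R :=
  \sum_(i < K) \sum_(S in recovering_sets i | v \in S) x i S.

Lemma sum_parity_recovering_set i S :
  S \in recovering_sets i -> \sum_(v in S) (parity v)%:R = 1 :> R.
Proof.
rewrite recovering_setsE => /imsetP [u]; rewrite inE /recovering_set => u_odd ->.
case: eqP => [_|_]; first by rewrite big_set1 parity_ebasis.
have u_notin : u \notin [set vadd u (ebasis i)].
  by apply/set1P => /(congr1 parity); rewrite parity_vadd_ebasis; case: parity.
by rewrite big_setU1 //= big_set1 parity_vadd_ebasis u_odd addr0.
Qed.

Lemma sum_allocation_parity_load x :
  \sum_(i < K) \sum_(S in recovering_sets i) x i S
  = \sum_v (parity v)%:R * node_load x v.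
Proof.
transitivity (\sum_(i < K) \sum_(S in recovering_sets i)
                \sum_v if v \in S then (parity v)%:R * x i S else 0).
  apply: eq_bigr => i _; apply: eq_bigr => S S_in.
  by rewrite -big_mkcond /= -mulr_suml (sum_parity_recovering_set S_in) mul1r.
under eq_bigr => i _ do rewrite exchange_big /=.
rewrite exchange_big /=; apply: eq_bigr => v _.
rewrite /node_load mulr_sumr; apply: eq_bigr => i _.
by rewrite mulr_sumr big_mkcondr.
Qed.

Lemma sum_parity : (0 < K)%N -> \sum_v (parity v)%:R = (2 ^ K.-1)%:R :> R.
Proof.
move=> K_gt0; rewrite -(card_odd_vecs K_gt0) -sum1_card natr_sum [RHS]big_mkcond /=.
by apply: eq_bigr => v _; rewrite inE; case: parity.
Qed.

Lemma sum_recovering_sets_const i (c : R) :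
  \sum_(S in recovering_sets i) c = c *+ #|odd_vecs|.
Proof.
by rewrite recovering_setsE big_imset ?sumr_const //; apply: recovering_set_inj.
Qed.

Lemma node_load_const (c : 'I_K -> R) v :
  v != vzero K -> node_load (fun i _ => c i) v = \sum_(i < K) c i.
Proof.
move=> v_nz; apply: eq_bigr => i _.
by rewrite -big_set /= recovering_sets_through // big_set1.
Qed.

End Allocations.
End SimplexCode.

Lemma can_serve_sum_le (R : realFieldType) (K : nat) (mu : R) (lam : 'I_K -> R) :
  (0 < K)%N -> can_serve mu lam -> \sum_(i < K) lam i <= (2 ^ K.-1)%:R * mu.
Proof.
move=> K_gt0 [x [_ sum_x load_x]].
rewrite -(eq_bigr _ (fun i _ => sum_x i)) sum_allocation_parity_load.
rewrite -(sum_parity R K_gt0) mulr_suml; apply: ler_sum => v _.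
have [->|v_nz] := eqVneq v (vzero K); first by rewrite parity0 !mul0r.
by apply: ler_wpM2l; [exact: ler0n | exact: load_x].
Qed.

Lemma can_serve_even_split (R : realFieldType) (K : nat) (mu : R) (lam : 'I_K -> R) :
  (0 < K)%N -> (forall i, 0 <= lam i) ->
  \sum_(i < K) lam i <= (2 ^ K.-1)%:R * mu -> can_serve mu lam.
Proof.
move=> K_gt0 lam_ge0 sum_le.
have n_gt0 : 0 < (2 ^ K.-1)%:R :> R by rewrite ltr0n expn_gt0.
exists (fun i _ => lam i / (2 ^ K.-1)%:R); split.
- by move=> i S _; rewrite divr_ge0 // ltW.
- move=> i; rewrite sum_recovering_sets_const card_odd_vecs //.
  by rewrite -mulr_natr divfK // gt_eqF.
- move=> v v_nz; change (node_load (fun i _ => lam i / (2 ^ K.-1)%:R) v <= mu).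
  rewrite node_load_const // -mulr_suml.
  by rewrite ler_pdivrMr // mulrC.
Qed.

Theorem theorem3 (R : realFieldType) (K : nat) (mu : R) (lam : 'I_K -> R) :
  (1 <= K)%N -> 0 < mu -> (forall i, 0 <= lam i) ->
  (can_serve mu lam <-> \sum_(i < K) lam i <= (2 ^ K.-1)%:R * mu).
Proof.
move=> K_gt0 _ lam_ge0; split.
- exact: can_serve_sum_le.
- exact: can_serve_even_split.
Qed.
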